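(* Let $G=(V,E)$ be a finite graph and let $(G_n)_{n\in\mathbb{N}}$ be a sequence with $G_0=G$, $G_n$ a $2$-lift of $G_{n-1}$, and covering maps $\pi_n:G_n\to G$, such that for every $v\in V$ and every $v_n\in\pi_n^{-1}(v)$, $(G_n,v_n)\to(T(G),v)$ in $\mathcal{G}_\star$. Then $G_n$ converges in the local weak sense to $(T(G),o)$, where $o$ is the root of $T(G)$ corresponding to a uniformly random vertex $v$ of $G$.
   Context: A $2$-lift of $G$ has vertex set $V\times\{0,1\}$ with each edge $(u,v)$ replaced either by $((u,0),(v,0)),((u,1),(v,1))$ or by $((u,0),(v,1)),((u,1),(v,0))$. $(T(G),v)$ is the tree of finite non-backtracking walks in $G$ from $v$. $\mathcal{G}_\star$ is the space of locally finite connected rooted graphs up to rooted isomorphism with distance $1/(1+r)$, $r$ the largest radius at which the balls around the roots are rooted-isomorphic. For a finite graph $H$, $\mathcal{U}(H)$ is the law on $\mathcal{G}_\star$ of $H$ restricted to the component of a uniformly random root; $H_n$ converges in the local weak sense to a random rooted graph $(T,o)$ if $\mathcal{U}(H_n)$ converges weakly to the law of $(T,o)$. *)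

From HB Require Import structures.
From mathcomp Require Import all_boot all_order all_algebra.
From mathcomp Require Import all_classical all_reals all_analysis.
From Stdlib Require Import Relations.
From Stdlib Require Lists.List.
Set Implicit Arguments. Unset Strict Implicit. Unset Printing Implicit Defensive.
Import Order.TTheory GRing.Theory Num.Theory.
Local Open Scope classical_set_scope.
Local Open Scope ring_scope.

Record rooted_graph := RGraph {
  rg_T : Type;
  rg_adj : rg_T -> rg_T -> Prop;
  rg_root : rg_T }.
Arguments rg_adj : clear implicits.
Arguments rg_root : clear implicits.

Definition good_rg (g : rooted_graph) : Prop :=
  (forall x y, rg_adj g x y -> rg_adj g y x) /\
  (forall x, ~ rg_adj g x x) /\
  (forall x, exists s : list (rg_T g), forall y, rg_adj g x y -> Stdlib.Lists.List.In y s) /\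
  (forall x, clos_refl_trans _ (rg_adj g) (rg_root g) x).

Fixpoint within (g : rooted_graph) (r : nat) (x : rg_T g) : Prop :=
  match r with
  | 0 => x = rg_root g
  | r'.+1 => within r' x \/ exists y, within r' y /\ rg_adj g y x
  end.

Definition ball_iso (r : nat) (g h : rooted_graph) : Prop :=
  exists (phi : rg_T g -> rg_T h) (psi : rg_T h -> rg_T g),
    phi (rg_root g) = rg_root h /\
    (forall x, within r x -> within r (phi x) /\ psi (phi x) = x) /\
    (forall y, within r y -> within r (psi y) /\ phi (psi y) = y) /\
    (forall x y, within r x -> within r y ->
       (rg_adj g x y <-> rg_adj h (phi x) (phi y))).

Definition rooted_iso (g h : rooted_graph) : Prop :=
  exists (phi : rg_T g -> rg_T h) (psi : rg_T h -> rg_T g),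
    cancel phi psi /\ cancel psi phi /\ phi (rg_root g) = rg_root h /\
    (forall x y, rg_adj g x y <-> rg_adj h (phi x) (phi y)).

(* the distance of G_star: 1/(1+r), r the largest radius with isomorphic balls
   (0 if all balls are isomorphic) *)
Definition rdist (R : realType) (g h : rooted_graph) : R :=
  inf [set (1 + r%:R)^-1 | r in [set r : nat | ball_iso r g h]].

(* f is a bounded continuous function on G_star, given on representatives *)
Definition bcont_Gstar (R : realType) (f : rooted_graph -> R) : Prop :=
  (forall g h, good_rg g -> good_rg h -> rooted_iso g h -> f g = f h) /\
  (exists M : R, forall g, good_rg g -> `|f g| <= M) /\
  (forall g, good_rg g -> forall eps : R, 0 < eps -> exists2 delta : R, 0 < delta &
     forall h, good_rg h -> rdist R g h < delta -> `|f g - f h| < eps).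

Definition comp_rg (T : finType) (e : rel T) (u : T) : rooted_graph :=
  @RGraph {x : T | connect e u x} (fun x y => e (sval x) (sval y))
          (exist _ u (connect0 e u)).

Definition is_2lift (T : finType) (e : rel T) (e' : rel (T * bool)%type) : Prop :=
  exists s : T -> T -> bool, (forall u v, s u v = s v u) /\
    forall u i v j, e' (u, i) (v, j) = e u v && (j == xorb i (s u v)).

Fixpoint liftT (V : finType) (n : nat) : finType :=
  match n with 0 => V | n'.+1 => (liftT V n' * bool)%type end.

Fixpoint proj_lift (V : finType) (n : nat) : liftT V n -> V :=
  match n return liftT V n -> V with
  | 0 => fun x => x
  | n'.+1 => fun x => proj_lift x.1
  end.

Fixpoint nonbacktrack (V : eqType) (s : seq V) : bool :=
  match s with
  | x :: ((y :: z :: _) as t) => (x != z) && nonbacktrack t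
  | _ => true
  end.

(* a walk v, s_1, ..., s_k is encoded by s = [:: s_1; ...; s_k] *)
Definition nbwalk (V : finType) (e : rel V) (v : V) (s : seq V) : bool :=
  path e v s && nonbacktrack (v :: s).

Lemma nbwalk_nil (V : finType) (e : rel V) (v : V) : nbwalk e v [::].
Proof. by []. Qed.

Definition nbtree (V : finType) (e : rel V) (v : V) : rooted_graph :=
  @RGraph {s : seq V | nbwalk e v s}
    (fun x y => (exists z, sval y = rcons (sval x) z) \/
                (exists z, sval x = rcons (sval y) z))
    (exist _ [::] (nbwalk_nil e v)).

(** The hypothesis only controls [(G_n, w_n)] along sections [w_n] of the
    fibres [pi_n^{-1}(v)]; choosing at every level a point of the fibre that
    is worst for a given test function upgrades this to convergence uniform
    over the fibre, hence, [V] being finite, uniform over all of [G_n].  Every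
    fibre of [pi_n] has [2^n] points, so the uniform measure on [G_n] projects
    onto the uniform measure on [V], and averaging the uniform bound gives the
    convergence of the integrals of every bounded continuous function. *)
From Pilot Require Import Defs.
From HB Require Import structures.
From mathcomp Require Import all_boot all_order all_algebra.
From mathcomp Require Import all_classical all_reals all_analysis.
From Stdlib Require Import Relations.
Import Order.TTheory GRing.Theory Num.Theory numFieldNormedType.Exports.
Local Open Scope classical_set_scope.
Local Open Scope ring_scope.

Lemma In_of_mem (T : eqType) (x : T) (s : seq T) : x \in s -> List.In x s.
Proof.
elim: s => [|y s IH] //=; rewrite in_cons => /orP [/eqP ->|/IH]; by [left|right].
Qed.

Lemma good_comp_rg (T : finType) (e : rel T) (u : T) :
  (forall x y, e x y = e y x) -> (forall x, ~~ e x x) -> good_rg (comp_rg e u).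
Proof.
move=> esym eirr; split; [|split; [|split]].
- by move=> x y /=; rewrite esym.
- by move=> x /=; rewrite (negbTE (eirr _)).
- move=> x; exists (enum {: {x : T | connect e u x}}) => y _.
  by apply: In_of_mem; rewrite mem_enum.
- case=> y uy /=.
  have path_rt p a (ua : connect e u a) : path e a p ->
      forall b (ub : connect e u b), b = last a p ->
      clos_refl_trans _ (rg_adj (comp_rg e u)) (exist _ a ua) (exist _ b ub).
    elim: p a ua => [|x p IH] a ua /=.
      by move=> _ b ub bE; subst b; rewrite (eq_irrelevance ub ua); apply: rt_refl.
    move=> /andP [eax px] b ub bE.
    have ux : connect e u x by apply: connect_trans ua (connect1 eax).
    by apply: (rt_trans _ _ _ (exist _ x ux)); [apply: rt_step | apply: IH].
  have /connectP [p pp yE] := uy.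
  exact: path_rt pp y uy yE.
Qed.

Lemma nonbacktrack_rcons (V : eqType) (t : seq V) z :
  nonbacktrack (rcons t z) -> nonbacktrack t.
Proof. by elim: t => [|x [|y [|w t]] IH] //= /andP [-> /IH]. Qed.

Lemma nbwalk_rcons {V : finType} {e : rel V} {v s z} :
  nbwalk e v (rcons s z) -> nbwalk e v s.
Proof.
rewrite /nbwalk rcons_path -rcons_cons => /andP [/andP [-> _]].
exact: nonbacktrack_rcons.
Qed.

Lemma good_nbtree {V : finType} (e : rel V) (v : V) : good_rg (nbtree e v).
Proof.
split; [|split; [|split]].
- by move=> x y /= [h|h]; [right|left].
- by move=> [s ws] /= [] [z /(congr1 size)]; rewrite size_rcons => /n_Sn.
- move=> [s ws].
  exists (pmap insub ([seq rcons s z | z <- enum V] ++ [:: rev (behead (rev s))])).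
  move=> [t wt] /= st; apply: In_of_mem; rewrite mem_pmap_sub mem_cat /=.
  case: st => [[z ->]|[z ->]]; apply/orP; [left|right].
    by apply/mapP; exists z; rewrite ?mem_enum.
  by rewrite rev_rcons /= revK mem_seq1.
- move=> [s ws] /=; elim/last_ind: s ws => [|s z IH] ws.
    by rewrite (eq_irrelevance ws (nbwalk_nil e v)); apply: rt_refl.
  apply: (rt_trans _ _ _ (exist _ s (nbwalk_rcons ws))); first exact: IH.
  by apply: rt_step; left; exists z.
Qed.

Lemma ball_iso_sym r g h : ball_iso r g h -> ball_iso r h g.
Proof.
move=> [phi [psi [phi_root [phiK [psiK phi_adj]]]]].
exists psi, phi; split; [|split; [exact: psiK|split; [exact: phiK|]]].
- have root_in : Defs.within r (rg_root g) by elim: (r) => [|k IH] /=; [|left].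
  by rewrite -phi_root; case: (phiK _ root_in).
- move=> x y hx hy; have [_ xE] := psiK x hx; have [_ yE] := psiK y hy.
  by rewrite phi_adj ?xE ?yE //; [apply: (psiK x hx).1 | apply: (psiK y hy).1].
Qed.

Lemma rdistC (R : realType) g h : rdist R g h = rdist R h g.
Proof.
rewrite /rdist; congr (inf _); apply/seteqP; split => x /= [r hr <-];
  by exists r => //; apply: ball_iso_sym.
Qed.

Lemma is_2lift_sym (T : finType) (e : rel T) (e' : rel (T * bool)) :
  is_2lift e e' -> (forall x y, e x y = e y x) -> forall x y, e' x y = e' y x.
Proof.
move=> [s [ssym e'E]] esym [u i] [v j]; rewrite !e'E esym ssym.
by case: (e v u); case: i; case: j; case: (s v u).
Qed.

Lemma is_2lift_irr (T : finType) (e : rel T) (e' : rel (T * bool)) :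
  is_2lift e e' -> (forall x, ~~ e x x) -> forall x, ~~ e' x x.
Proof. by move=> [s [_ e'E]] eirr [u i]; rewrite e'E (negbTE (eirr u)). Qed.

Lemma proj_lift_surj (V : finType) n (v : V) :
  exists u : liftT V n, proj_lift u = v.
Proof. by elim: n => [|n [u uv]]; [exists v | exists (u, false)]. Qed.

Definition avg {R : numFieldType} {T : finType} (g : T -> R) : R :=
  (#|T|%:R)^-1 * \sum_(t : T) g t.

Lemma sum_proj_lift (R : numFieldType) (V : finType) (g : V -> R) n :
  \sum_(u : liftT V n) g (proj_lift u) = (2 ^ n)%:R * \sum_(v : V) g v.
Proof.
elim: n => [|n IH]; first by rewrite mul1r.
rewrite -[LHS]/(\sum_(u : liftT V n * bool) g (proj_lift u.1)).
rewrite -(pair_big xpredT xpredT (fun x (_ : bool) => g (proj_lift x))) /=.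
under eq_bigr do rewrite big_bool.
by rewrite big_split /= IH expnS natrM -mulrDl -mulr2n mulr_natl.
Qed.

Lemma card_liftT (V : finType) n : #|liftT V n| = (#|V| * 2 ^ n)%N.
Proof.
elim: n => [|n IH]; first by rewrite muln1.
by rewrite [LHS]card_prod card_bool IH expnS mulnCA mulnC.
Qed.

Lemma avg_proj_lift {R : numFieldType} {V : finType} (g : V -> R) n :
  avg (fun u : liftT V n => g (proj_lift u)) = avg g.
Proof.
rewrite /avg sum_proj_lift card_liftT natrM invfM -mulrA.
by rewrite mulKf // pnatr_eq0 expn_eq0.
Qed.

Lemma avg_dist_le (R : numFieldType) (T : finType) (a b : T -> R) (eps : R) :
  0 <= eps -> (forall t, `|a t - b t| <= eps) -> `|avg a - avg b| <= eps.
Proof.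
move=> eps_ge0 ab_le; rewrite /avg -mulrBr -sumrB normrM ger0_norm ?invr_ge0 //.
have [T0|Tpos] := posnP #|T|; first by rewrite T0 invr0 mul0r.
rewrite ler_pdivrMl ?ltr0n // mulr_natl -sumr_const.
exact: le_trans (ler_norm_sum _ _ _) (ler_sum _ (fun t _ => ab_le t)).
Qed.

Lemma near_forall_fiber (I : Type) (F : set_system I) (T : I -> Type)
    (P Q : forall i, T i -> Prop) : Filter F ->
  (forall i, exists x, P i x) ->
  (forall w : forall i, T i, (forall i, P i (w i)) ->
     \forall i \near F, Q i (w i)) ->
  \forall i \near F, forall x, P i x -> Q i x.
Proof.
move=> FF P_inhabited Q_sections.
have worst i : exists x, P i x /\ (Q i x -> forall y, P i y -> Q i y).
  have [[y [Py nQy]]|all_Q] := pselect (exists y, P i y /\ ~ Q i y).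
    by exists y.
  have [x Px] := P_inhabited i; exists x; split=> // _ y Py.
  by apply: contrapT => nQy; apply: all_Q; exists y.
pose w i := proj1_sig (cid (worst i)).
have [Pw Qw] := all_and2 (fun i => proj2_sig (cid (worst i))).
by apply: filterS (Q_sections w Pw) => i; apply: Qw.
Qed.

Theorem proposition4p13 (R : realType) (V : finType) (e : rel V)
  (G : forall n : nat, rel (liftT V n)) :
  (forall u v, e u v = e v u) -> (forall u, ~~ e u u) ->
  G 0%N = e ->
  (forall n : nat, is_2lift (G n) (G n.+1)) ->
  (forall (v : V) (w : forall n : nat, liftT V n),
     (forall n, proj_lift (w n) = v) ->
     (fun n => rdist R (comp_rg (G n) (w n)) (nbtree e v)) @ \oo --> (0 : R)) ->
  forall f : rooted_graph -> R, bcont_Gstar f ->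
    (fun n => (#|liftT V n|%:R)^-1 * \sum_(u : liftT V n) f (comp_rg (G n) u))
      @ \oo --> ((#|V|%:R)^-1 * \sum_(v : V) f (nbtree e v) : R).
Proof.
move=> esym eirr G0 Glift Gcvg f [_ [_ fcont]].
have G_simple n : (forall x y, G n x y = G n y x) /\ (forall x, ~~ G n x x).
  elim: n => [|n [IHs IHi]]; first by rewrite G0.
  by split; [apply: is_2lift_sym IHs | apply: is_2lift_irr IHi].
have Ggood n (u : liftT V n) : good_rg (comp_rg (G n) u).
  by have [Gsym Girr] := G_simple n; apply: good_comp_rg.
change ((fun n => avg (fun u : liftT V n => f (comp_rg (G n) u)))
  @ \oo --> avg (fun v => f (nbtree e v))).
apply/cvgrPdist_le => eps eps_gt0.
have near_fiber v : \forall n \near \oo, forall u : liftT V n,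
    proj_lift u = v -> `|f (nbtree e v) - f (comp_rg (G n) u)| <= eps.
  have [delta delta_gt0 fclose] := fcont _ (good_nbtree e v) eps eps_gt0.
  apply: near_forall_fiber => [n|w wv]; first exact: proj_lift_surj.
  have /cvgrPdist_lt /(_ delta delta_gt0) := Gcvg v w wv.
  apply: filterS => n; rewrite sub0r normrN rdistC => close.
  by apply/ltW/fclose; [apply: Ggood | apply: le_lt_trans (ler_norm _) close].
near=> n; rewrite -(avg_proj_lift (fun v => f (nbtree e v)) n).
apply: avg_dist_le; first exact: ltW.
near: n; apply: filterS (filter_forall _ near_fiber) => n near_v u.
exact: near_v.
Unshelve. all: end_near.
Qed.
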